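(* Let $\{s_k\}_{k\in\mathbb{N}_0}$ be a positive sequence and let $\{\ell_k\}_{k\in\mathbb{N}_0}$ be a sequence of nonnegative integers such that $\{a^{\ell_k}\}_{k\in\mathbb{N}_0}$ is a positive sequence for every $a\in\mathbb{R}$. Then the sequence $\{\tilde s_k\}_{k\in\mathbb{N}_0}$ given by $\tilde s_k=s_{k+\ell_k}$ is a positive sequence.
   Context: A sequence of real numbers $\{s_k\}_{k\in\mathbb{N}_0}$ is called positive if for every $n\in\mathbb{N}_0$ the Hankel matrix $(s_{i+j})_{i,j=0}^n$ is positive semidefinite. The convention $0^0=1$ is used. *)

From Stdlib Require Import Reals.
Open Scope R_scope.

Definition hankel_psd (s : nat -> R) (n : nat) : Prop :=
  forall c : nat -> R,
    0 <= sum_f_R0 (fun i => sum_f_R0 (fun j => c i * s (i + j)%nat * c j) n) n.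

Definition positive_seq (s : nat -> R) : Prop :=
  forall n : nat, hankel_psd s n.

(* Testing the 2x2 Hankel minors of (a^(l k)) with a > 0 gives
   a^(l(2i) + l(2j)) >= a^(2 l(i+j)) for all a > 0, which forces equality of the
   exponents; hence l is affine, l k = l 0 + m k.  Moreover (-1)^(l 0) >= 0, so
   l 0 = 2h is even.  Then s (k + l k) = s ((m+1) k + 2h), and the Hankel form of
   this sequence is the Hankel form of s evaluated at the vector that puts c_i at
   position (m+1) i + h. *)
From Stdlib Require Import Reals Lra Lia Psatz.
Open Scope R_scope.

Lemma sum_f_R0_swap (f : nat -> nat -> R) (n N : nat) :
  sum_f_R0 (fun p => sum_f_R0 (fun i => f i p) n) N =
  sum_f_R0 (fun i => sum_f_R0 (fun p => f i p) N) n.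
Proof.
  induction n as [|n IH]; simpl.
  - reflexivity.
  - rewrite plus_sum, IH. reflexivity.
Qed.

Lemma sum_f_R0_const0 (N : nat) : sum_f_R0 (fun _ => 0) N = 0.
Proof. induction N as [|N IH]; simpl; lra. Qed.

Lemma sum_f_R0_kronecker (k N : nat) (v : nat -> R) :
  (k <= N)%nat ->
  sum_f_R0 (fun p => if Nat.eqb p k then v p else 0) N = v k.
Proof.
  induction N as [|N IH]; intros Hk; cbn [sum_f_R0].
  - replace k with 0%nat by lia. reflexivity.
  - destruct (Nat.eq_dec k (S N)) as [->|Hne].
    + rewrite Nat.eqb_refl, (sum_eq _ (fun _ => 0)), sum_f_R0_const0; [lra|].
      intros i Hi. destruct (Nat.eqb_spec i (S N)); [lia|reflexivity].
    + replace (Nat.eqb (S N) k) with false by (symmetry; apply Nat.eqb_neq; lia).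
      rewrite IH by lia. lra.
Qed.

Fixpoint max_upto (phi : nat -> nat) (n : nat) : nat :=
  match n with
  | 0 => phi 0%nat
  | S n => Nat.max (max_upto phi n) (phi (S n))
  end.

Lemma le_max_upto (phi : nat -> nat) (n i : nat) :
  (i <= n)%nat -> (phi i <= max_upto phi n)%nat.
Proof.
  induction n as [|n IH]; intros Hi; simpl.
  - replace i with 0%nat by lia. lia.
  - destruct (Nat.eq_dec i (S n)) as [->|]; [lia|]. specialize (IH ltac:(lia)). lia.
Qed.

Lemma sum_f_R0_pushforward (phi : nat -> nat) (c G : nat -> R) (n N : nat) :
  (forall i, (i <= n)%nat -> (phi i <= N)%nat) ->
  sum_f_R0 (fun p =>
    sum_f_R0 (fun i => if Nat.eqb p (phi i) then c i else 0) n * G p) N =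
  sum_f_R0 (fun i => c i * G (phi i)) n.
Proof.
  intros Hphi.
  rewrite (sum_eq _ (fun p =>
    sum_f_R0 (fun i => (if Nat.eqb p (phi i) then c i else 0) * G p) n)).
  2:{ intros p _. rewrite Rmult_comm, scal_sum. apply sum_eq. intros; lra. }
  rewrite sum_f_R0_swap. apply sum_eq. intros i Hi.
  rewrite <- (sum_f_R0_kronecker (phi i) N (fun p => c i * G p)) by (apply Hphi; lia).
  apply sum_eq. intros p _. destruct (Nat.eqb p (phi i)); lra.
Qed.

Lemma positive_seq_hankel_comp (s : nat -> R) (phi : nat -> nat) (c : nat -> R) (n : nat) :
  positive_seq s ->
  0 <= sum_f_R0 (fun i => sum_f_R0 (fun j => c i * s (phi i + phi j)%nat * c j) n) n.
Proof.
  intros hs.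
  set (N := max_upto phi n).
  assert (Hphi : forall i, (i <= n)%nat -> (phi i <= N)%nat)
    by (intros; apply le_max_upto; lia).
  set (d := fun p => sum_f_R0 (fun i => if Nat.eqb p (phi i) then c i else 0) n).
  specialize (hs N d).
  rewrite (sum_eq _ (fun p => d p * sum_f_R0 (fun j => c j * s (p + phi j)%nat) n)) in hs.
  2:{ intros p _.
      rewrite <- (sum_f_R0_pushforward phi c (fun q => s (p + q)%nat) n N Hphi).
      rewrite scal_sum. apply sum_eq. intros; unfold d; lra. }
  unfold d in hs. rewrite sum_f_R0_pushforward in hs by exact Hphi.
  eapply Rle_trans; [exact hs|]. right. apply sum_eq. intros i _.
  rewrite scal_sum. apply sum_eq. intros; lra.
Qed.

Lemma positive_seq_ext (s t : nat -> R) :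
  (forall k, s k = t k) -> positive_seq s -> positive_seq t.
Proof.
  intros Hst hs n c. eapply Rle_trans; [exact (hs n c)|]. right.
  apply sum_eq. intros i _. apply sum_eq. intros j _. rewrite Hst. reflexivity.
Qed.

Lemma positive_seq_affine_even (s : nat -> R) (d h : nat) :
  positive_seq s -> positive_seq (fun k => s (d * k + 2 * h)%nat).
Proof.
  intros hs n c.
  eapply Rle_trans; [exact (positive_seq_hankel_comp s (fun i => d * i + h)%nat c n hs)|].
  right. apply sum_eq. intros i _. apply sum_eq. intros j _.
  replace (d * i + h + (d * j + h))%nat with (d * (i + j) + 2 * h)%nat by nia.
  reflexivity.
Qed.

Lemma positive_seq_nonneg0 (s : nat -> R) : positive_seq s -> 0 <= s 0%nat.
Proof. intros hs. pose proof (hs 0%nat (fun _ => 1)) as H. simpl in H. lra. Qed.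

Lemma pow_exponent_eq (p q : nat) : (forall a, 0 < a -> a ^ q <= a ^ p) -> p = q.
Proof.
  intros H. destruct (Nat.lt_total p q) as [Hlt|[Heq|Hlt]]; [exfalso| exact Heq |exfalso].
  - pose proof (Rlt_pow 2 p q ltac:(lra) Hlt). specialize (H 2 ltac:(lra)). lra.
  - pose proof (Rlt_pow 2 q p ltac:(lra) Hlt). specialize (H (/ 2) ltac:(lra)).
    rewrite !pow_inv in H.
    assert (0 < 2 ^ q) by (apply pow_lt; lra).
    pose proof (Rinv_lt_contravar (2 ^ q) (2 ^ p) ltac:(nra) ltac:(lra)). lra.
Qed.

Lemma positive_pow_exponents_midpoint (l : nat -> nat) (i j : nat) :
  (forall a : R, positive_seq (fun k => a ^ l k)) ->
  (l (i + i) + l (j + j) = l (i + j) + l (i + j))%nat.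
Proof.
  intros hl. apply pow_exponent_eq. intros a Ha.
  set (A := a ^ l (i + i)%nat). set (B := a ^ l (i + j)%nat). set (C := a ^ l (j + j)%nat).
  (* the 2x2 Hankel minor at indices i, j, tested on the vector (B, -A) *)
  pose proof (positive_seq_hankel_comp _ (fun k => if Nat.eqb k 0 then i else j)
                (fun k => if Nat.eqb k 0 then B else - A) 1 (hl a)) as H.
  simpl in H. rewrite (Nat.add_comm j i) in H. fold A B C in H.
  assert (0 < A) by (apply pow_lt; lra).
  rewrite !pow_add. fold A B C. nra.
Qed.

Lemma midpoint_affine (l : nat -> nat) :
  (forall i j, l (i + i) + l (j + j) = l (i + j) + l (i + j))%nat ->
  forall k, l k = (l 0 + k * (l 1 - l 0))%nat.
Proof.
  intros Hmid.
  assert (Hstep : forall k, (l (S k) + l 0 = l k + l 1)%nat).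
  { intros k. pose proof (Hmid 0%nat k). pose proof (Hmid 1%nat k).
    pose proof (Hmid 0%nat 1%nat). simpl in *. lia. }
  assert (Hsum : forall k, (l k + k * l 0 = l 0 + k * l 1)%nat).
  { induction k as [|k IH]; [simpl; lia|]. specialize (Hstep k). nia. }
  assert (Hle : (l 0 <= l 1)%nat).
  { destruct (Nat.le_gt_cases (l 0%nat) (l 1%nat)) as [|Hlt]; [assumption|].
    specialize (Hsum (S (l 0%nat))). nia. }
  intros k. specialize (Hsum k). nia.
Qed.

Theorem mainTheorem4 (s : nat -> R) (l : nat -> nat)
  (hs : positive_seq s)
  (hl : forall a : R, positive_seq (fun k => a ^ (l k))) :
  positive_seq (fun k => s (k + l k)%nat).
Proof.
  set (m := (l 1 - l 0)%nat).
  assert (Hl : forall k, l k = (l 0 + k * m)%nat)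
    by (apply midpoint_affine; intros; apply positive_pow_exponents_midpoint, hl).
  assert (Hev : Nat.Even (l 0%nat)).
  { destruct (Nat.Even_or_Odd (l 0%nat)) as [|[h Hh]]; [assumption|exfalso].
    pose proof (positive_seq_nonneg0 _ (hl (-1))) as H. simpl in H.
    rewrite Hh, Nat.add_1_r, pow_1_odd in H. lra. }
  destruct Hev as [h Hh].
  apply (positive_seq_ext (fun k => s ((m + 1) * k + 2 * h)%nat));
    [| apply positive_seq_affine_even, hs].
  intros k. rewrite (Hl k), Hh. f_equal. lia.
Qed.
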